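(* Let $n \geq s$ be positive integers and let $P_0 > 0$. Let $\mathbf{\Psi}\in\mathbb{C}^{n\times n}$ be positive semi-definite with eigenvalue decomposition $\mathbf{\Psi} = \mathbf{U}_2\mathbf{\Lambda}_2\mathbf{U}_2^H$, where $\mathbf{U}_2$ is unitary and $\mathbf{\Lambda}_2$ is diagonal with diagonal entries $[\mathbf{\Lambda}_2]_{1,1}\geq \cdots \geq [\mathbf{\Lambda}_2]_{n,n}\geq 0$. Let $\mathbf{A}\in\mathbb{C}^{n\times s}$ satisfy $\text{tr}(\mathbf{A}\mathbf{A}^H)\leq P_0$, and let $\mathbf{A}^H\mathbf{\Psi}\mathbf{A}=\mathbf{U}_1\mathbf{\Lambda}_1\mathbf{U}_1^H$ be an eigenvalue decomposition, where $\mathbf{U}_1$ is unitary and $\mathbf{\Lambda}_1$ is diagonal with $[\mathbf{\Lambda}_1]_{1,1}\geq\cdots\geq[\mathbf{\Lambda}_1]_{s,s}\geq 0$. Define $\tilde{\mathbf{p}}\in\mathbb{R}^s$ by $[\tilde{\mathbf{p}}]_i = [\mathbf{\Lambda}_1]_{i,i}/[\mathbf{\Lambda}_2]_{i,i}$ for $i=1,\dots,s$ (with $[\tilde{\mathbf{p}}]_i = 0$ whenever $[\mathbf{\Lambda}_2]_{i,i}=0$), let $\mathbf{P}$ be the real $n\times s$ matrix $\mathbf{P} = \left[ \begin{array}{c} \text{diag}(\tilde{\mathbf{p}}) \\ \mathbf{0}_{(n-s)\times s} \end{array} \right]$, let $\mathbf{P}^{1/2}$ denote the entrywise square root of $\mathbf{P}$,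 and set $\tilde{\mathbf{A}}=\mathbf{U}_2\mathbf{P}^{1/2}$. Then $$\tilde{\mathbf{A}}^H\mathbf{\Psi}\tilde{\mathbf{A}} = \mathbf{\Lambda}_1 \quad \text{and} \quad \text{tr}(\tilde{\mathbf{A}}\tilde{\mathbf{A}}^H)\leq \text{tr}(\mathbf{A}\mathbf{A}^H).$$
   Context: $(\cdot)^H$ denotes conjugate transpose, $\text{tr}$ the trace, and $\text{diag}(\mathbf{x})$ the diagonal matrix whose diagonal entries are the entries of the vector $\mathbf{x}$. *)

From HB Require Import structures.
From mathcomp Require Import all_boot all_order all_algebra.
From mathcomp Require Export sesquilinear spectral.
Set Implicit Arguments. Unset Strict Implicit. Unset Printing Implicit Defensive.
Import Order.TTheory GRing.Theory Num.Theory.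
Local Open Scope ring_scope.
Local Open Scope sesquilinear_scope.

(* Conjugate transpose is  M ^t*  (= (map_mx conjC M)^T), from spectral.v. *)

Definition psdmx (C : numClosedFieldType) (n : nat) (M : 'M[C]_n) : Prop :=
  M ^t* = M /\ forall x : 'cV[C]_n, 0 <= (x ^t* *m M *m x) 0 0.

Definition nonincr_nonneg (C : numClosedFieldType) (n : nat) (d : 'rV[C]_n) : Prop :=
  (forall i j : 'I_n, (i <= j)%N -> d 0 j <= d 0 i) /\ (forall i, 0 <= d 0 i).

(* The n x s real matrix P = [diag(ptilde); 0_{(n-s) x s}], where
   ptilde_i = [Lambda1]_{ii} / [Lambda2]_{ii}  (0 when [Lambda2]_{ii} = 0). *)
Definition Pmat (C : numClosedFieldType) (n s : nat)
    (d1 : 'rV[C]_s) (d2 : 'rV[C]_n) : 'M[C]_(n, s) :=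
  \matrix_(i < n, j < s)
    if (i == j :> nat) then (if d2 0 i == 0 then 0 else d1 0 j / d2 0 i) else 0.

Definition Phalf (C : numClosedFieldType) (n s : nat)
    (d1 : 'rV[C]_s) (d2 : 'rV[C]_n) : 'M[C]_(n, s) :=
  map_mx sqrtC (Pmat d1 d2).

Definition Atilde (C : numClosedFieldType) (n s : nat)
    (U2 : 'M[C]_n) (d1 : 'rV[C]_s) (d2 : 'rV[C]_n) : 'M[C]_(n, s) :=
  U2 *m Phalf d1 d2.

From mathcomp Require Import all_boot all_order all_algebra.
From mathcomp Require Import sesquilinear spectral.
From mathcomp Require Import ring.
Set Implicit Arguments. Unset Strict Implicit. Unset Printing Implicit Defensive.
Import Order.TTheory GRing.Theory Num.Theory.
Local Open Scope ring_scope.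
Local Open Scope sesquilinear_scope.

(* Put W := U2^H A U1, so that W^H Lambda2 W = Lambda1 and tr(A A^H) = |W|_F^2,
   while Atilde^H Psi Atilde and tr(Atilde Atilde^H) only involve the diagonal
   entries [Lambda2]_jj p_j and p_j.  The columns of
   V := Lambda2^(1/2) W Lambda1^(-1/2) are orthonormal or zero, so
   c_jk := |V_kj|^2 is doubly substochastic and
   |W|_F^2 >= sum_j [Lambda1]_jj sum_k c_jk / [Lambda2]_kk.
   As Lambda1 is nonincreasing and 1 / Lambda2 nondecreasing, Abel summation
   reduces the bound sum_j p_j <= |W|_F^2 to the fact that the first j+1 rows
   of c spread a mass j+1 over columns holding at most 1 each, which costs at
   least the j+1 smallest weights.  The same count shows that [Lambda1]_jj > 0
   forces [Lambda2]_jj > 0, whence [Lambda2]_jj p_j = [Lambda1]_jj. *)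

Lemma sum1_ord_leq (R : pzSemiRingType) n (m : 'I_n) :
  \sum_(k < n | (k <= m)%N) (1 : R) = m.+1%:R.
Proof. by rewrite -(big_ord_widen n (fun _ => 1) (ltn_ord m)) sumr_const card_ord. Qed.

Lemma abel_sum_ge0 (R : numDomainType) s (a y : 'I_s -> R) :
  (forall i j : 'I_s, (i <= j)%N -> a j <= a i) -> (forall j, 0 <= a j) ->
  (forall m : 'I_s, 0 < a m -> 0 <= \sum_(j < s | (j <= m)%N) y j) ->
  0 <= \sum_j a j * y j.
Proof.
elim: s a y => [|s IH] a y a_nonincr a_ge0 y_prefix; first by rewrite big_ord0.
set w := widen_ord (leqnSn s); set a_s := a ord_max.
have split_top : \sum_(j < s.+1) a j * y j =
    \sum_(j < s) (a (w j) - a_s) * y (w j) + a_s * \sum_(j < s.+1) y j.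
  rewrite !big_ord_recr /= mulrDr mulr_sumr addrA -big_split /=.
  by congr (_ + _); apply: eq_bigr => j _; rewrite mulrBl subrK.
rewrite split_top; apply: addr_ge0.
  apply: IH => [i j ij | j | m am].
  - by rewrite lerB // a_nonincr.
  - by rewrite subr_ge0 a_nonincr //= ltnW.
  have am_pos : 0 < a (w m) by apply: lt_le_trans am _; rewrite gerBl a_ge0.
  have := y_prefix _ am_pos.
  by rewrite big_mkcond big_ord_recr /= leqNgt ltn_ord addr0 -big_mkcond.
have := a_ge0 ord_max; rewrite le0r => /orP[/eqP a_s0 | a_s_pos].
  by rewrite /a_s a_s0 mul0r.
apply: mulr_ge0; first exact: ltW.
have := y_prefix _ a_s_pos; rewrite (eq_bigl xpredT) => [//| j]; exact: leq_ord.
Qed.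

Lemma prefix_sum_le_weighted (R : numDomainType) n (x w : 'I_n -> R) (m : 'I_n) :
  (forall k, 0 <= x k <= 1) -> \sum_k x k = m.+1%:R ->
  (forall i j : 'I_n, (i <= j)%N -> w i <= w j) ->
  \sum_(k < n | (k <= m)%N) w k <= \sum_k x k * w k.
Proof.
move=> x01 sum_x w_nondecr.
pose b (k : 'I_n) : R := ((k <= m)%N)%:R.
have sum_bw : \sum_(k < n | (k <= m)%N) w k = \sum_k b k * w k.
  by rewrite big_mkcond; apply: eq_bigr => k _; rewrite /b; case: leqP; rewrite ?mul1r ?mul0r.
have sum_b : \sum_k b k = m.+1%:R.
  by rewrite -sum1_ord_leq [RHS]big_mkcond; apply: eq_bigr => k _; rewrite /b; case: leqP.
have shift : \sum_k (x k - b k) * (w k - w m) = \sum_k x k * w k - \sum_k b k * w k.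
  under eq_bigr do rewrite mulrBr.
  rewrite sumrB -mulr_suml sumrB sum_x sum_b subrr mul0r subr0 -sumrB.
  by apply: eq_bigr => k _; rewrite mulrBl.
rewrite sum_bw -subr_ge0 -shift; apply: sumr_ge0 => k _; rewrite /b.
have /andP[x_ge0 x_le1] := x01 k.
case: leqP => [km | mk].
  by rewrite mulr_le0 ?subr_le0 ?w_nondecr.
by rewrite subr0 mulr_ge0 // subr_ge0 w_nondecr // ltnW.
Qed.

Section PrefixMass.
Variables (R : numDomainType) (s n : nat) (a : 'I_s -> R) (c : 'I_s -> 'I_n -> R).
Hypotheses (hsn : (s <= n)%N)
  (a_nonincr : forall i j : 'I_s, (i <= j)%N -> a j <= a i)
  (a_ge0 : forall j, 0 <= a j)
  (c_ge0 : forall j k, 0 <= c j k)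
  (c_row : forall j, 0 < a j -> \sum_k c j k = 1)
  (c_col : forall k, \sum_j c j k <= 1).

Let mass (m : 'I_s) k := \sum_(j < s | (j <= m)%N) c j k.

Lemma mass_bounds m k : 0 <= mass m k <= 1.
Proof.
rewrite sumr_ge0 //=; apply: le_trans (c_col k).
by rewrite [leRHS](bigID (fun j : 'I_s => (j <= m)%N)) /= lerDl sumr_ge0.
Qed.

Lemma sum_mass m : 0 < a m -> \sum_k mass m k = m.+1%:R.
Proof.
move=> am; rewrite exchange_big /= -sum1_ord_leq; apply: eq_bigr => j jm.
by rewrite c_row // (lt_le_trans am) ?a_nonincr.
Qed.

Lemma prefix_rows_reach_tail m :
  0 < a m -> ~ (forall j (k : 'I_n), (m <= k)%N -> c j k = 0).
Proof.
move=> am c_tail; have : \sum_k mass m k <= m%:R.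
  rewrite (bigID (fun k : 'I_n => (m <= k)%N)) /= big1 ?add0r; last first.
    by move=> k mk; apply: big1 => j _; apply: c_tail.
  apply: (@le_trans _ _ (\sum_(k < n | ~~ (m <= k)%N) 1)).
    by apply: ler_sum => k _; have /andP[] := mass_bounds m k.
  rewrite (eq_bigl (fun k : 'I_n => (k < m)%N)) => [|k]; last by rewrite -ltnNge.
  have mn : (m <= n)%N := leq_trans (ltnW (ltn_ord m)) hsn.
  by rewrite -(big_ord_widen n (fun _ => 1 : R) mn) sumr_const card_ord.
by rewrite sum_mass // ler_nat ltnn.
Qed.

Lemma substochastic_rearrangement_le (w : 'I_n -> R) :
  (forall i j : 'I_n, (i <= j)%N -> w i <= w j) ->
  \sum_j a j * w (widen_ord hsn j) <= \sum_j a j * \sum_k c j k * w k.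
Proof.
move=> w_nondecr; rewrite -subr_ge0 -sumrB; under eq_bigr do rewrite -mulrBr.
apply: abel_sum_ge0 => // m am; rewrite sumrB subr_ge0.
have -> : \sum_(j < s | (j <= m)%N) \sum_k c j k * w k = \sum_k mass m k * w k.
  by rewrite exchange_big; apply: eq_bigr => k _; rewrite mulr_suml.
have -> : \sum_(j < s | (j <= m)%N) w (widen_ord hsn j)
        = \sum_(k < n | (k <= widen_ord hsn m)%N) w k.
  rewrite (eq_bigl (fun k : 'I_n => (k <= m)%N && (k < s)%N)) ?big_ord_narrow_cond //.
  by move=> k; apply/esym/andb_idr => km; apply: leq_ltn_trans km (ltn_ord m).
by apply: prefix_sum_le_weighted (mass_bounds m) _ w_nondecr; rewrite sum_mass.
Qed.

End PrefixMass.

Section ConjugateTranspose.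
Variable C : numClosedFieldType.

Lemma trmxC_mul m n p (X : 'M[C]_(m, n)) (Y : 'M[C]_(n, p)) :
  (X *m Y) ^t* = Y ^t* *m X ^t*.
Proof. by rewrite trmx_mul map_mxM. Qed.

Lemma unitarymx_tC_mul n (U : 'M[C]_n) : U \is unitarymx -> U ^t* *m U = 1%:M.
Proof. by move=> hU; rewrite -[U ^t*]mul1mx mulmxKtV. Qed.

Lemma diag_mx_tC n (d : 'rV[C]_n) :
  (forall i, 0 <= d 0 i) -> (diag_mx d) ^t* = diag_mx d.
Proof.
move=> d_ge0; apply/matrixP => i j; rewrite !mxE.
by have [->|ij] := eqVneq i j; rewrite ?eqxx ?mulr1n ?geC0_conj // eq_sym (negbTE ij) conjC0.
Qed.

Lemma tC_mul_self_entry m n (X : 'M[C]_(m, n)) j :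
  (X ^t* *m X) j j = \sum_k `|X k j| ^+ 2.
Proof. by rewrite mxE; apply: eq_bigr => k _; rewrite !mxE normCKC. Qed.

Lemma tC_mul_diag_entry m n (X : 'M[C]_(m, n)) (g : 'rV[C]_m) i j :
  (X ^t* *m diag_mx g *m X) i j = \sum_k (X k i)^* * g 0 k * X k j.
Proof.
by rewrite -mulmxA mul_diag_mx !mxE; apply: eq_bigr => k _; rewrite !mxE mulrA.
Qed.

Lemma mxtrace_tC_mul_self m n (X : 'M[C]_(m, n)) :
  \tr (X ^t* *m X) = \sum_j \sum_k `|X k j| ^+ 2.
Proof. by apply: eq_bigr => j _; rewrite tC_mul_self_entry. Qed.

Lemma mxtrace_mul_tC_unitary m n (U : 'M[C]_m) (V : 'M[C]_n) (A : 'M[C]_(m, n)) :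
  U \is unitarymx -> V \is unitarymx ->
  \tr ((U *m A *m V) *m (U *m A *m V) ^t*) = \tr (A *m A ^t*).
Proof.
move=> hU hV; rewrite !trmxC_mul !mulmxA mulmxtVK // mxtrace_mulC !mulmxA.
by rewrite unitarymx_tC_mul // mul1mx.
Qed.

Lemma diagonalized_congruence n s (U2 : 'M[C]_n) (U1 : 'M[C]_s) (A : 'M[C]_(n, s))
    (d2 : 'rV[C]_n) (d1 : 'rV[C]_s) :
  U1 \is unitarymx ->
  A ^t* *m (U2 *m diag_mx d2 *m U2 ^t*) *m A = U1 *m diag_mx d1 *m U1 ^t* ->
  (U2 ^t* *m A *m U1) ^t* *m diag_mx d2 *m (U2 ^t* *m A *m U1) = diag_mx d1.
Proof.
move=> hU1 hA; rewrite !trmxC_mul trmxCK.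
transitivity (U1 ^t* *m (A ^t* *m (U2 *m diag_mx d2 *m U2 ^t*) *m A) *m U1).
  by rewrite !mulmxA.
by rewrite hA !mulmxA mulmxKtV // unitarymx_tC_mul // mul1mx.
Qed.

(* Bessel: V V^H is an orthogonal projection, so its diagonal lies in [0, 1]. *)
Lemma partial_isometry_row_le1 n s (V : 'M[C]_(n, s)) (e : pred 'I_s) :
  V ^t* *m V = diag_mx (\row_j (e j)%:R) -> forall k, \sum_j `|V k j| ^+ 2 <= 1.
Proof.
move=> VtV k.
have V_supp : V *m diag_mx (\row_j (e j)%:R) = V.
  apply/matrixP => i j; rewrite mul_mx_diag !mxE.
  have [//|ej] := boolP (e j); first by rewrite mulr1.
  have /eqP col0 : \sum_k `|V k j| ^+ 2 == 0.
    by rewrite -tC_mul_self_entry VtV !mxE eqxx (negbTE ej).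
  have /eqP : `|V i j| ^+ 2 = 0.
    exact: psumr_eq0P (fun k _ => exprn_ge0 2 (normr_ge0 (V k j))) col0 i isT.
  by rewrite sqrf_eq0 normr_eq0 mulr0 => /eqP ->.
set Q := V *m V ^t*.
have Q_idem : Q *m Q = Q by rewrite /Q mulmxA -(mulmxA V) VtV V_supp.
have Q_herm : Q ^t* = Q by rewrite /Q trmxC_mul trmxCK.
have Qkk : Q k k = \sum_j `|V k j| ^+ 2.
  have -> : Q = V ^t* ^t* *m V ^t* by rewrite trmxCK.
  rewrite tC_mul_self_entry.
  by apply: eq_bigr => j _; rewrite !mxE norm_conjC.
have Q_ge0 : 0 <= Q k k by rewrite Qkk sumr_ge0 // => j _; rewrite exprn_ge0.
have Q_sq : Q k k ^+ 2 <= Q k k.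
  have {2}-> : Q k k = \sum_i `|Q i k| ^+ 2 by rewrite -tC_mul_self_entry Q_herm Q_idem.
  by rewrite (bigD1 k) //= ger0_norm // lerDl sumr_ge0 // => i _; rewrite exprn_ge0.
rewrite -Qkk; move: Q_ge0 Q_sq; rewrite le0r => /orP[/eqP -> _| Q_pos]; first exact: ler01.
by move=> Q_sq; rewrite -(ler_pM2l Q_pos) mulr1 -expr2.
Qed.

End ConjugateTranspose.

Section PmatFacts.
Variables (C : numClosedFieldType) (n s : nat) (d1 : 'rV[C]_s) (d2 : 'rV[C]_n).
Hypotheses (hsn : (s <= n)%N)
  (d1_ge0 : forall j, 0 <= d1 0 j) (d2_ge0 : forall k, 0 <= d2 0 k).

Lemma Pmat_ge0 i j : 0 <= Pmat d1 d2 i j.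
Proof. by rewrite mxE; case: ifP => // _; case: ifP => // _; rewrite divr_ge0. Qed.

Lemma Phalf_entry k j :
  Phalf d1 d2 k j = (k == widen_ord hsn j)%:R * sqrtC (Pmat d1 d2 (widen_ord hsn j) j).
Proof.
rewrite [LHS]mxE; have [->|kj] := eqVneq k (widen_ord hsn j); first by rewrite mul1r.
rewrite mul0r mxE; case: eqP => [kj'|_]; last exact: sqrtC0.
by case/eqP: kj; apply: val_inj.
Qed.

Lemma Phalf_congruence (g : 'rV[C]_n) :
  (Phalf d1 d2) ^t* *m diag_mx g *m Phalf d1 d2
  = diag_mx (\row_j (g 0 (widen_ord hsn j) * Pmat d1 d2 (widen_ord hsn j) j)).
Proof.
apply/matrixP => i j; rewrite tC_mul_diag_entry.
under eq_bigr do rewrite !Phalf_entry.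
rewrite (bigD1 (widen_ord hsn j)) //= big1 ?addr0 => [|k kj]; last first.
  by rewrite (negbTE kj) !mul0r mulr0.
rewrite eqxx mul1r [RHS]mxE [in RHS]mxE.
have [->|ij] := eqVneq i j; last first.
  by rewrite -[widen_ord _ _ == _]/(j == i) eq_sym (negbTE ij) mul0r conjC0 !mul0r mulr0n.
rewrite eqxx mul1r mulr1n geC0_conj ?sqrtC_ge0 ?Pmat_ge0 //.
by rewrite mulrAC -expr2 sqrtCK mulrC.
Qed.

End PmatFacts.

Section Core.
Variables (C : numClosedFieldType) (n s : nat) (d2 : 'rV[C]_n) (d1 : 'rV[C]_s)
  (W : 'M[C]_(n, s)).
Hypotheses (hsn : (s <= n)%N) (d2_nonincr : nonincr_nonneg d2)
  (d1_nonincr : nonincr_nonneg d1) (hW : W ^t* *m diag_mx d2 *m W = diag_mx d1).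

(* Since [(sqrtC 0)^-1 = 0], the columns of [V] where [d1] vanishes are zero. *)
Let V := diag_mx (\row_k sqrtC (d2 0 k)) *m W *m diag_mx (\row_j (sqrtC (d1 0 j))^-1).

Lemma V_tC_V : V ^t* *m V = diag_mx (\row_j (d1 0 j != 0)%:R).
Proof.
have [d2_ge0 d1_ge0] := (d2_nonincr.2, d1_nonincr.2).
rewrite /V !trmxC_mul !diag_mx_tC => [|k|j]; last 2 first.
- by rewrite mxE sqrtC_ge0.
- by rewrite mxE invr_ge0 sqrtC_ge0.
have sqrt_d2 : diag_mx (\row_k sqrtC (d2 0 k)) *m diag_mx (\row_k sqrtC (d2 0 k))
               = diag_mx d2.
  by rewrite mulmx_diag; congr diag_mx; apply/rowP => k; rewrite !mxE -expr2 sqrtCK.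
transitivity (diag_mx (\row_j (sqrtC (d1 0 j))^-1) *m
   (W ^t* *m (diag_mx (\row_k sqrtC (d2 0 k)) *m diag_mx (\row_k sqrtC (d2 0 k))) *m W)
   *m diag_mx (\row_j (sqrtC (d1 0 j))^-1)); first by rewrite !mulmxA.
rewrite sqrt_d2 hW !mulmx_diag; congr diag_mx; apply/rowP => j; rewrite !mxE.
rewrite mulrAC -expr2 exprVn sqrtCK.
by have [->|d1j] := eqVneq (d1 0 j) 0; rewrite ?mulr0 ?mulVf.
Qed.

Lemma V_entry k j : `|V k j| ^+ 2 = d2 0 k * `|W k j| ^+ 2 / d1 0 j.
Proof.
have norm_sqrtC x : 0 <= x -> `|sqrtC x| = sqrtC x.
  by move=> x_ge0; rewrite ger0_norm ?sqrtC_ge0.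
rewrite /V mul_mx_diag mxE mul_diag_mx !mxE !normrM !exprMn normfV exprVn.
by rewrite !norm_sqrtC ?d2_nonincr.2 ?d1_nonincr.2 // !sqrtCK.
Qed.

Let c (j : 'I_s) (k : 'I_n) := `|V k j| ^+ 2.

Fact c_ge0 j k : 0 <= c j k.
Proof. exact: exprn_ge0. Qed.

Fact c_row j : 0 < d1 0 j -> \sum_k c j k = 1.
Proof. by move=> d1j; rewrite -tC_mul_self_entry V_tC_V !mxE eqxx lt0r_neq0. Qed.

Fact c_col k : \sum_j c j k <= 1.
Proof. exact: partial_isometry_row_le1 V_tC_V k. Qed.

Lemma d2_neq0 j : 0 < d1 0 j -> d2 0 (widen_ord hsn j) != 0.
Proof.
move=> d1j; apply/eqP => d2j.
apply: (prefix_rows_reach_tail hsn d1_nonincr.1 c_ge0 c_row c_col d1j).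
move=> i k jk; rewrite /c V_entry.
have -> : d2 0 k = 0 by apply/le_anti; rewrite d2_nonincr.2 andbT -d2j d2_nonincr.1.
by rewrite !mul0r.
Qed.

Lemma d2_mul_Pmat j : d2 0 (widen_ord hsn j) * Pmat d1 d2 (widen_ord hsn j) j = d1 0 j.
Proof.
rewrite mxE eqxx; case: eqP => [d2j | /eqP d2j]; last by rewrite mulrCA mulfV ?mulr1.
rewrite mulr0; apply/esym/eqP; apply: contraT => d1j.
have /d2_neq0 : 0 < d1 0 j by rewrite lt0r d1j d1_nonincr.2.
by rewrite d2j eqxx.
Qed.

(* [c] puts no mass on the columns where [d2] vanishes, so they may get any
   weight; one dominating all [(d2 0 k)^-1] keeps [w] nondecreasing. *)
Let w (k : 'I_n) : C := if d2 0 k == 0 then \sum_i (d2 0 i)^-1 else (d2 0 k)^-1.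

Fact w_nondecr (i j : 'I_n) : (i <= j)%N -> w i <= w j.
Proof.
move=> ij; have [d2_nonincr' d2_ge0] := d2_nonincr; rewrite /w.
have inv_le_sum k : (d2 0 k)^-1 <= \sum_i (d2 0 i)^-1.
  by rewrite (bigD1 k) //= lerDl sumr_ge0 // => l _; rewrite invr_ge0.
have [_|d2j] := eqVneq (d2 0 j) 0; first by case: ifP.
have d2j_pos : 0 < d2 0 j by rewrite lt0r d2j d2_ge0.
have d2i_pos : 0 < d2 0 i := lt_le_trans d2j_pos (d2_nonincr' _ _ ij).
by rewrite (gt_eqF d2i_pos) lef_pV2 ?posrE ?d2_nonincr'.
Qed.

Lemma sum_Pmat_le : \sum_j Pmat d1 d2 (widen_ord hsn j) j <= \sum_j \sum_k `|W k j| ^+ 2.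
Proof.
have [d1_ge0 d2_ge0] := (d1_nonincr.2, d2_nonincr.2).
have Pmat_le : \sum_j Pmat d1 d2 (widen_ord hsn j) j <= \sum_j d1 0 j * w (widen_ord hsn j).
  apply: ler_sum => j _; rewrite mxE eqxx /w.
  by case: ifP => _; rewrite ?mulr_ge0 ?sumr_ge0 // => i _; rewrite invr_ge0.
have le_frobenius : \sum_j d1 0 j * \sum_k c j k * w k <= \sum_j \sum_k `|W k j| ^+ 2.
  apply: ler_sum => j _; rewrite mulr_sumr; apply: ler_sum => k _; rewrite /c V_entry /w.
  have [->|d2k] := eqVneq (d2 0 k) 0; first by rewrite !mul0r mulr0 exprn_ge0.
  have [->|d1j] := eqVneq (d1 0 j) 0; first by rewrite mul0r exprn_ge0.
  by rewrite le_eqVlt; apply/orP; left; apply/eqP; field; rewrite d2k d1j.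
apply: le_trans Pmat_le (le_trans _ le_frobenius).
exact (substochastic_rearrangement_le hsn d1_nonincr.1 d1_ge0 c_ge0 c_row c_col w_nondecr).
Qed.

End Core.

Lemma Atilde_congruence (C : numClosedFieldType) n s (U2 G : 'M[C]_n)
    (d1 : 'rV[C]_s) (d2 : 'rV[C]_n) :
  U2 \is unitarymx ->
  (Atilde U2 d1 d2) ^t* *m (U2 *m G *m U2 ^t*) *m Atilde U2 d1 d2
  = (Phalf d1 d2) ^t* *m G *m Phalf d1 d2.
Proof. by move=> hU2; rewrite /Atilde trmxC_mul !mulmxA !mulmxKtV. Qed.

Theorem theorem1 (C : numClosedFieldType) (n s : nat) (P0 : C)
  (hs : (0 < s)%N) (hsn : (s <= n)%N) (hP0 : 0 < P0)
  (Psi : 'M[C]_n) (U2 : 'M[C]_n) (d2 : 'rV[C]_n)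
  (A : 'M[C]_(n, s)) (U1 : 'M[C]_s) (d1 : 'rV[C]_s) :
  psdmx Psi ->
  U2 \is unitarymx -> nonincr_nonneg d2 ->
  Psi = U2 *m diag_mx d2 *m U2 ^t* ->
  \tr (A *m A ^t*) <= P0 ->
  U1 \is unitarymx -> nonincr_nonneg d1 ->
  A ^t* *m Psi *m A = U1 *m diag_mx d1 *m U1 ^t* ->
  (Atilde U2 d1 d2) ^t* *m Psi *m Atilde U2 d1 d2 = diag_mx d1 /\
  \tr (Atilde U2 d1 d2 *m (Atilde U2 d1 d2) ^t*) <= \tr (A *m A ^t*).
Proof.
move=> _ hU2 hd2 hPsi _ hU1 hd1 hA.
set W := U2 ^t* *m A *m U1.
have hW : W ^t* *m diag_mx d2 *m W = diag_mx d1.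
  by apply: diagonalized_congruence; rewrite -?hPsi.
split.
  rewrite hPsi Atilde_congruence // (Phalf_congruence hsn hd1.2 hd2.2).
  by congr diag_mx; apply/rowP => j; rewrite mxE (d2_mul_Pmat hsn hd2 hd1 hW).
have -> : \tr (A *m A ^t*) = \sum_j \sum_k `|W k j| ^+ 2.
  by rewrite -mxtrace_tC_mul_self [RHS]mxtrace_mulC mxtrace_mul_tC_unitary ?trmxC_unitary.
have AtAt : (Atilde U2 d1 d2) ^t* *m Atilde U2 d1 d2
            = (Phalf d1 d2) ^t* *m diag_mx (const_mx 1) *m Phalf d1 d2.
  by rewrite diag_const_mx -(Atilde_congruence 1%:M _ _ hU2) mulmx1 (unitarymxP hU2) mulmx1.
rewrite mxtrace_mulC AtAt (Phalf_congruence hsn hd1.2 hd2.2) mxtrace_diag.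
under eq_bigr do rewrite mxE [const_mx _ _ _]mxE mul1r.
exact: sum_Pmat_le hsn hd2 hd1 hW.
Qed.
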